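(* Consider a market in which every hospital's utility is proportional to total wage, i.e. for each $h\in H$ there is $\gamma_h>0$ with $f_h(Y)=\gamma_h w_h(Y)$ for all $Y\subseteq X_h$. For each $h$, let $\mathrm{Ch}_h$ be the choice function that, given $X'\subseteq X_h$ (with $\mathrm{Ch}_h(\emptyset)=\emptyset$), sorts $X'$ in non-decreasing order of wage (ties broken by a fixed order) as $x^{(1)},\dots,x^{(|X'|)}$, sets $Y=\{x^{(|X'|)}\}$, for $i=1,\dots,|X'|-1$ adds $x^{(i)}$ to $Y$ if $w_h(Y\cup\{x^{(i)}\})<1.5\,B_h$, and returns $Y$. Then the generalized deferred acceptance mechanism with these choice functions produces a $B'_H$-stable matching for some $B'_H$ with $B_h\le B'_h\le1.5\,B_h$ for every $h\in H$.
   Context: A market consists of a finite set of doctors $D$, a finite set of hospitals $H$, a finite set of contracts $X\subseteq D\times H\times\mathbb{R}_{>0}$ (contract $x=(d,h,w)$ has doctor $x_D=d$, hospital $x_H=h$, wage $x_W=w$), strict preferences $\succ_d$ of each doctor $d$ over $X_d\cup\{\emptyset\}$, utilities $f_h$ of each hospital on subsets of $X_h$, and budgets $B_h>0$ with $0<x_W\le B_h$ for all $x\in X_h$. For $Y\subseteq X$: $Y_d=\{x\in Y:x_D=d\}$, $Y_h=\{x\in Y:x_H=h\}$, $w_h(Y)=\sum_{x\in Y_h}x_W$. A matching is $Y\subseteq X$ with $|Y_d|\le1$ for all $d$. Given $B'_H=(B'_h)_h$, a matching $Y$ is $B'_H$-feasible if $w_h(Y)\le B'_h$ for all $h$; a matching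 $Z\subseteq X_h$ blocks $Y$ if every doctor $x_D$ with $x\in Z\setminus Y$ strictly prefers $x$ to her contract in $Y$ (or to $\emptyset$), $f_h(Z)>f_h(Y_h)$ and $w_h(Z)\le B'_h$; $Y$ is $B'_H$-stable if it is $B'_H$-feasible and not blocked by any $h$ and $Z\subseteq X_h$. Generalized deferred acceptance with hospital choice functions $\mathrm{Ch}_h$: let $\mathrm{Ch}_H(Y)=\bigcup_h\mathrm{Ch}_h(Y_h)$; $\mathrm{Ch}_d(Y)=\{x\}$ for the $\succ_d$-best $x\in Y_d$ if $x\succ_d\emptyset$, else $\emptyset$; $\mathrm{Ch}_D(Y)=\bigcup_d\mathrm{Ch}_d(Y_d)$. Set $R^{(0)}=\emptyset$; for $i=1,2,\dots$: $Y^{(i)}=\mathrm{Ch}_D(X\setminus R^{(i-1)})$, $Z^{(i)}=\mathrm{Ch}_H(Y^{(i)})$, $R^{(i)}=R^{(i-1)}\cup(Y^{(i)}\setminus Z^{(i)})$; if $Y^{(i)}=Z^{(i)}$, output $Y^{(i)}$. *)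

From HB Require Import structures.
From mathcomp Require Import all_boot all_order all_algebra.
Set Implicit Arguments. Unset Strict Implicit. Unset Printing Implicit Defensive.
Import Order.TTheory GRing.Theory Num.Theory.
Local Open Scope ring_scope.

Section Market.
Variables (R : realFieldType) (D H X : finType).
Variables (xD : X -> D) (xH : X -> H) (xW : X -> R).
(* strict preferences of doctor d over X_d ∪ {∅} (None = ∅) as an injective
   rank: higher rank = more preferred *)
Variable rk : D -> option X -> nat.
Variable f : H -> {set X} -> R.
Variables (B : H -> R) (tb : X -> nat).

Definition restrH (h : H) (Y : {set X}) : {set X} := [set x in Y | xH x == h].
Definition wsum (h : H) (Y : {set X}) : R := \sum_(x in Y | xH x == h) xW x.

Definition is_matching (Y : {set X}) : Prop :=
  forall d : D, (#|[set x in Y | xD x == d]| <= 1)%N.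

Definition prefers_to_current (x : X) (Y : {set X}) : Prop :=
  let d := xD x in
  (forall y, y \in Y -> xD y = d -> (rk d (Some y) < rk d (Some x))%N) /\
  ((forall y, y \in Y -> xD y <> d) -> (rk d None < rk d (Some x))%N).

Definition feasible (B' : H -> R) (Y : {set X}) : Prop :=
  is_matching Y /\ forall h, wsum h Y <= B' h.

Definition blocks (B' : H -> R) (Y : {set X}) (h : H) (Z : {set X}) : Prop :=
  [/\ (forall x, x \in Z -> xH x = h),
      is_matching Z,
      (forall x, x \in Z -> x \notin Y -> prefers_to_current x Y),
      f h (restrH h Y) < f h Z &
      wsum h Z <= B' h].

Definition stable (B' : H -> R) (Y : {set X}) : Prop :=
  feasible B' Y /\ forall h Z, ~ blocks B' Y h Z.

Definition chD (Y : {set X}) : {set X} :=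
  [set x in Y | (rk (xD x) None < rk (xD x) (Some x))%N &&
     [forall y in Y, (xD y == xD x) ==> (rk (xD x) (Some y) <= rk (xD x) (Some x))%N]].

Definition wage_le (x y : X) : bool :=
  (xW x < xW y) || ((xW x == xW y) && (tb x <= tb y)%N).

(* Ch_h of the theorem: start with the largest element x^(|X'|), then add
   x^(1), ..., x^(|X'|-1) in order whenever the total wage stays < 1.5 B_h *)
Definition ch_h (h : H) (S : {set X}) : {set X} :=
  match sort wage_le (enum S) with
  | [::] => set0
  | x1 :: s =>
      foldl (fun Y x => if wsum h (x |: Y) < (3 / 2) * B h then x |: Y else Y)
            [set last x1 s] (belast x1 s)
  end.

Definition chH (Y : {set X}) : {set X} := \bigcup_(h : H) ch_h h (restrH h Y).

Definition da_step (Rj : {set X}) : {set X} :=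
  let Y := chD (~: Rj) in Rj :|: (Y :\: chH Y).
Definition da_R (n : nat) : {set X} := iter n da_step set0.
(* Y^(n+1) and Z^(n+1) *)
Definition da_Y (n : nat) : {set X} := chD (~: da_R n).
Definition da_Z (n : nat) : {set X} := chH (da_Y n).

End Market.

(* Once hospital h rejects an offer y, it holds from then on an offer m
   dearer than y such that y does not fit under the cap 1.5 B_h beside m and
   the held offers cheaper than y.  This survives every later round: the
   offers h receives only grow, since held offers are re-proposed, and the
   greedy choice from a larger set either rejects an offer cheaper than y
   (which is an even stronger witness) or keeps all cheap held offers and a
   top offer at least as dear as m.  So at the final matching Y every
   rejected contract z of h satisfies 1.5 B_h <= w_h(Y) + w(z).
   Take B'_h = max(B_h, w_h(Y)), which is at most 1.5 B_h since the greedy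
   choice stays below the cap.  A blocking set Z of h has
   w_h(Y) < w(Z) <= B_h, so each of its contracts outside Y costs more than
   B_h / 2; hence there is exactly one, y, and Z cannot contain the dearer
   m in Y that outbids y, which gives w(Z) <= w(y) + w_h(Y) - w(m) <= w_h(Y).
   The algorithm stops because every non-final round rejects a new contract. *)

From HB Require Import structures.
From mathcomp Require Import all_boot all_order all_algebra.
From mathcomp Require Import lra.
Set Implicit Arguments. Unset Strict Implicit. Unset Printing Implicit Defensive.
Import Order.TTheory GRing.Theory Num.Theory.
Local Open Scope ring_scope.

Section Market.
Variables (R : realFieldType) (D H X : finType).
Variables (xD : X -> D) (xH : X -> H) (xW : X -> R).
Variables (rk : D -> option X -> nat) (B : H -> R) (tb : X -> nat).

Local Notation wle := (wage_le xW tb).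
Local Notation ws := (wsum xH xW).
Local Notation ch := (ch_h xH xW B tb).
Local Notation chH := (chH xH xW B tb).
Local Notation chD := (chD xD rk).
Local Notation Yd n := (da_Y xD xH xW rk B tb n).
Local Notation Zd n := (da_Z xD xH xW rk B tb n).
Local Notation Rd n := (da_R xD xH xW rk B tb n).

Hypothesis tb_inj : injective tb.
Hypothesis xW_ge0 : forall x, 0 <= xW x.
Hypothesis B_gt0 : forall h, 0 < B h.
Hypothesis xW_le_B : forall x, xW x <= B (xH x).
Hypothesis rk_inj : forall d, {in [pred o : option X | if o is Some x then xD x == d else true] &,
  injective (rk d)}.

Lemma wage_leW x y : wle x y -> xW x <= xW y.
Proof. by rewrite /wage_le => /orP [/ltW|/andP [/eqP -> _]]. Qed.

Lemma wage_le_refl x : wle x x.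
Proof. by rewrite /wage_le eqxx leqnn orbT. Qed.

Lemma wage_le_total x y : wle x y || wle y x.
Proof.
by rewrite /wage_le; case: (ltgtP (xW x) (xW y)) => //= _; rewrite leq_total.
Qed.

Lemma wage_le_trans y x z : wle x y -> wle y z -> wle x z.
Proof.
rewrite /wage_le.
case: (ltgtP (xW x) (xW y)) => //= xy; case: (ltgtP (xW y) (xW z)) => //= yz.
- by rewrite (lt_trans xy yz).
- by rewrite -yz xy.
- by rewrite xy yz.
- by rewrite xy yz eqxx ltxx /=; apply: leq_trans.
Qed.

Lemma wage_le_anti x y : wle x y -> wle y x -> x = y.
Proof.
rewrite /wage_le; case: (ltgtP (xW x) (xW y)) => //= _ xy yx.
by apply: tb_inj; apply/eqP; rewrite eqn_leq xy yx.
Qed.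

Definition wage_lt x y := (x != y) && wle x y.

Lemma wage_ltW x y : wage_lt x y -> wle x y.
Proof. by case/andP. Qed.

Lemma wage_lt_nle x y : wage_lt x y -> ~~ wle y x.
Proof.
by case/andP => xy le_xy; apply: contra xy => le_yx; rewrite (wage_le_anti le_xy le_yx).
Qed.

Lemma wage_lt_le_trans y x z : wage_lt x y -> wle y z -> wage_lt x z.
Proof.
move=> lt_xy le_yz; rewrite /wage_lt (wage_le_trans (wage_ltW lt_xy) le_yz) andbT.
by apply: contraTneq le_yz => <-; apply: wage_lt_nle.
Qed.

Lemma pairwise_wage_lt_sort (S : {set X}) : pairwise wage_lt (sort wle (enum S)).
Proof.
have sorted_S : sorted wle (sort wle (enum S)) by apply: sort_sorted; exact: wage_le_total.
rewrite (sorted_pairwise wage_le_trans) in sorted_S.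
have := sort_uniq wle (enum S); rewrite enum_uniq uniq_pairwise => uniq_S.
by rewrite /wage_lt pairwise_relI uniq_S sorted_S.
Qed.

Lemma wsumE h (A : {set X}) : ws h A = \sum_(x in A) (if xH x == h then xW x else 0).
Proof. by rewrite /wsum big_mkcondr. Qed.

Lemma wsum_subset h (A C : {set X}) : A \subset C -> ws h A <= ws h C.
Proof.
move=> sAC; rewrite !wsumE [leRHS](big_setID A) /= (setIidPr sAC) lerDl.
by apply: sumr_ge0 => x _; case: ifP.
Qed.

Lemma wsum_setU_le h (A C : {set X}) : ws h (A :|: C) <= ws h A + ws h C.
Proof.
rewrite !wsumE (big_setID A) /= (setIidPr (subsetUl A C)) lerD2l -!wsumE.
by apply: wsum_subset; apply/subsetP => x; rewrite !inE; case: (x \in A).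
Qed.

Lemma wsum_set1_le h x : ws h [set x] <= xW x.
Proof. by rewrite wsumE big_set1; case: ifP. Qed.

Lemma wsum_setU1 h x (A : {set X}) :
  x \notin A -> xH x = h -> ws h (x |: A) = xW x + ws h A.
Proof. by move=> xA xh; rewrite !wsumE big_setU1 //= xh eqxx. Qed.

Lemma wsum_set2 h x y : x != y -> xH x = h -> xH y = h -> ws h [set x; y] = xW x + xW y.
Proof.
by move=> xy xh yh; rewrite wsum_setU1 ?inE // wsumE big_set1 yh eqxx.
Qed.

Lemma wsum_restrH h (Y : {set X}) : ws h (restrH xH h Y) = ws h Y.
Proof. by apply: eq_bigl => x; rewrite !inE -andbA andbb. Qed.

Definition greedy_step h (Y : {set X}) x : {set X} :=
  if ws h (x |: Y) < 3 / 2 * B h then x |: Y else Y.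

Lemma subset_greedy_fold h l (A : {set X}) : A \subset foldl (greedy_step h) A l.
Proof.
elim: l A => [|x l IH] A //=; apply: subset_trans (IH _).
by rewrite /greedy_step; case: ifP => _; [apply: subsetUr|].
Qed.

Lemma greedy_fold_subset h l (A : {set X}) x :
  x \in foldl (greedy_step h) A l -> (x \in A) || (x \in l).
Proof.
elim: l A => [|a l IH] A /=; first by move->.
move/IH; rewrite inE /greedy_step.
by case: ifP => _; rewrite ?inE; case: (x == a); case: (x \in A).
Qed.

Lemma greedy_fold_lt h l (A : {set X}) :
  ws h A < 3 / 2 * B h -> ws h (foldl (greedy_step h) A l) < 3 / 2 * B h.
Proof.
by elim: l A => [|a l IH] A //= hA; apply: IH; rewrite /greedy_step; case: ifP.
Qed.

(* When [x] was examined, the held set was [A] plus the kept elements cheaper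
   than [x], and adding [x] to it broke the cap. *)
Lemma greedy_fold_rejected h l (A : {set X}) x :
  pairwise wage_lt l -> x \in l -> x \notin foldl (greedy_step h) A l ->
  3 / 2 * B h <=
    ws h (x |: [set y in foldl (greedy_step h) A l | (y \in A) || wage_lt y x]).
Proof.
elim: l A => [|a l IH] A //= /andP [lt_a_l pw_l].
have sub_a := subset_greedy_fold h l (greedy_step h A a).
rewrite inE; case: (boolP (x \in l)) => [xl _ xF | _ /[!orbF] /eqP -> aF].
  apply: le_trans (IH _ pw_l xl xF) _; apply: wsum_subset.
  apply/subsetP => y; rewrite !inE => /orP [->//|/andP [yF]].
  rewrite yF /= => /orP [|->]; last by rewrite !orbT.
  rewrite /greedy_step; case: ifP => _; last by move->; rewrite orbT.
  by case/setU1P => [->|->]; rewrite ?(allP lt_a_l x xl) !orbT.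
have a_rejected : ~~ (ws h (a |: A) < 3 / 2 * B h).
  apply: contra aF => a_fits; apply: (subsetP sub_a).
  by rewrite /greedy_step a_fits setU11.
rewrite -leNgt in a_rejected; apply: (le_trans a_rejected); apply: wsum_subset.
apply/subsetP => y; rewrite !inE => /orP [->//|yA]; rewrite yA andbT.
by apply/orP; right; apply: (subsetP sub_a); rewrite /greedy_step ltNge a_rejected.
Qed.

Lemma ch_h_subset h (S : {set X}) : ch h S \subset S.
Proof.
rewrite /ch_h; case E: (sort _ (enum S)) => [|x1 s]; first exact: sub0set.
have memS y : (y \in S) = (y == last x1 s) || (y \in belast x1 s).
  by rewrite -mem_enum -(mem_sort wle) E lastI mem_rcons in_cons.
by apply/subsetP => x /greedy_fold_subset; rewrite inE memS.
Qed.

Lemma wsum_ch_h_lt h (S : {set X}) : ws h (ch h S) < 3 / 2 * B h.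
Proof.
have Bh := B_gt0 h; rewrite /ch_h; case: (sort _ _) => [|x1 s].
  by rewrite wsumE big_set0; lra.
apply: greedy_fold_lt; rewrite wsumE big_set1; case: eqP => [<-|_]; last lra.
by have := xW_le_B (last x1 s); have := B_gt0 (xH (last x1 s)); lra.
Qed.

Lemma ch_h_top h (S : {set X}) x0 : x0 \in S -> exists M,
  [/\ M \in ch h S, (forall c, c \in S -> wle c M) &
      forall x, x \in S -> x \notin ch h S ->
        wage_lt x M /\
        3 / 2 * B h <= xW x + xW M + ws h [set c in ch h S | wage_lt c x]].
Proof.
move=> x0S; have := pairwise_wage_lt_sort S.
rewrite /ch_h; case E: (sort _ (enum S)) => [|x1 s].
  by move: x0S; rewrite -mem_enum -(mem_sort wle) E.
have memS y : (y \in S) = (y == last x1 s) || (y \in belast x1 s).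
  by rewrite -mem_enum -(mem_sort wle) E lastI mem_rcons in_cons.
rewrite lastI pairwise_rcons => /andP [lt_top pw].
set M := last x1 s; set l := belast x1 s; set G := foldl _ _ _.
have MG : M \in G by apply: (subsetP (subset_greedy_fold _ _ _)); rewrite inE.
exists M; split => // [c|x]; rewrite memS.
  by case/orP => [/eqP ->|cl]; [apply: wage_le_refl|apply/wage_ltW/(allP lt_top)].
case/orP => [/eqP ->|xl xG]; first by rewrite MG.
split; first exact: (allP lt_top).
apply: le_trans (greedy_fold_rejected pw xl xG) _.
apply: le_trans (wsum_setU_le _ _ _) _; rewrite -addrA lerD ?wsum_set1_le //.
apply: le_trans (_ : ws h ([set M] :|: [set c in G | wage_lt c x]) <= _).
  apply: wsum_subset; apply/subsetP => y; rewrite !inE.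
  by case/andP => ->; case/orP => ->; rewrite ?orbT.
by apply: le_trans (wsum_setU_le _ _ _) _; rewrite lerD2r wsum_set1_le.
Qed.

(* What a hospital retains after rejecting [y]: a dearer held offer [m] such
   that [y] does not fit beside [m] and the held offers cheaper than [y]. *)
Definition outbids h (C : {set X}) y := exists2 m, m \in C &
  wage_lt y m /\ 3 / 2 * B h <= ws h [set c in C | wage_lt c y] + xW m + xW y.

Lemma outbids_subset h y (C C' : {set X}) :
  C \subset C' -> outbids h C y -> outbids h C' y.
Proof.
move=> sCC' [m mC [lt_ym hb]]; exists m; first exact: (subsetP sCC').
split=> //; apply: (le_trans hb); rewrite !lerD2r; apply: wsum_subset.
by apply/subsetP => c; rewrite !inE => /andP [/(subsetP sCC') -> ->].
Qed.

Lemma ch_h_outbids h y (S : {set X}) :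
  y \in S -> y \notin ch h S -> outbids h (ch h S) y.
Proof.
move=> yS yG; have [M [MG _ top]] := ch_h_top h yS.
by have [lt_yM hb] := top y yS yG; exists M => //; split => //; lra.
Qed.

(* Either some offer cheaper than [y] is rejected from [S], which gives the
   bound directly, or all held offers cheaper than [y] are kept, and the top
   offer of [S] is at least as dear as [m]. *)
Lemma outbids_ch_h h y (C S : {set X}) :
  C \subset S -> outbids h C y -> outbids h (ch h S) y.
Proof.
move=> sCS [m mC [lt_ym hb]]; have mS := subsetP sCS m mC.
have [M [MG top_le top]] := ch_h_top h mS.
exists M => //; split; first exact: wage_lt_le_trans lt_ym (top_le m mS).
have [r /and3P [rS rG lt_ry] | no_cheap_rejection] :=
  pickP [pred r | [&& r \in S, r \notin ch h S & wage_lt r y]].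
  have [_ hr] := top r rS rG; have := wage_leW (wage_ltW lt_ry).
  have : ws h [set c in ch h S | wage_lt c r] <= ws h [set c in ch h S | wage_lt c y].
    apply: wsum_subset; apply/subsetP => c; rewrite !inE => /andP [-> lt_cr].
    exact: wage_lt_le_trans lt_cr (wage_ltW lt_ry).
  lra.
have := wage_leW (top_le m mS).
have : ws h [set c in C | wage_lt c y] <= ws h [set c in ch h S | wage_lt c y].
  apply: wsum_subset; apply/subsetP => c; rewrite !inE => /andP [cC lt_cy].
  have := no_cheap_rejection c; rewrite /= (subsetP sCS c cC) lt_cy andbT.
  by move/negbFE ->.
lra.
Qed.

Lemma outbids_wsum h y (C : {set X}) :
  (forall c, c \in C -> xH c = h) -> outbids h C y ->
  exists2 m, m \in C & xW y <= xW m /\ 3 / 2 * B h <= ws h C + xW y.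
Proof.
move=> Ch [m mC [lt_ym hb]]; exists m => //.
split; first exact/wage_leW/wage_ltW.
have m_cheap : m \notin [set c in C | wage_lt c y].
  by rewrite inE; apply/negP => /andP [_ /wage_ltW]; apply/negP/wage_lt_nle.
have : ws h (m |: [set c in C | wage_lt c y]) <= ws h C.
  by apply: wsum_subset; apply/subsetP => c /setU1P [->|]; last rewrite inE => /andP [].
rewrite wsum_setU1 ?Ch //; lra.
Qed.

(* Offers outside [Y] that are outbid at [Y] cost more than [B h / 2], so
   a set [Z] within budget [B h] has at most one of them, [y], and cannot also
   contain the offer [m] that outbids [y]: trading [m] for [y] loses wage. *)
Lemma wsum_le_of_outbid h (Y Z : {set X}) :
  (forall z, z \in Z -> xH z = h) -> ws h Z <= B h ->
  (forall z, z \in Z -> z \notin Y -> exists2 m, m \in restrH xH h Y &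
     xW z <= xW m /\ 3 / 2 * B h <= ws h Y + xW z) ->
  ws h Z <= ws h Y.
Proof.
move=> Zh ZB outbid; rewrite leNgt; apply/negP => YZ.
have heavy z : z \in Z -> z \notin Y -> B h < 2 * xW z.
  by move=> zZ zY; have [m _ [_ hb]] := outbid z zZ zY; lra.
have pair_le z1 z2 : z1 \in Z -> z2 \in Z -> z1 != z2 -> xW z1 + xW z2 <= ws h Z.
  move=> z1Z z2Z z12; rewrite -(wsum_set2 z12 (Zh _ z1Z) (Zh _ z2Z)); apply: wsum_subset.
  by apply/subsetP => z /set2P [] ->.
have [y /andP [yZ yY] | Z_sub_Y] := pickP [pred z | (z \in Z) && (z \notin Y)];
    last first.
  have : Z \subset restrH xH h Y.
    apply/subsetP => z zZ; rewrite inE Zh // eqxx andbT.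
    by have := Z_sub_Y z; rewrite /= zZ => /negbFE.
  by move/(wsum_subset h); rewrite wsum_restrH => /(lt_le_trans YZ); rewrite ltxx.
have [m mYh [le_ym _]] := outbid y yZ yY.
have hy := heavy y yZ yY.
have /andP [mY /eqP mh] : (m \in Y) && (xH m == h) by rewrite inE in mYh.
have ym : y != m by apply: contraNneq yY => ->.
have mZ : m \notin Z by apply/negP => mZ; have := pair_le y m yZ mZ ym; lra.
have Z_sub : Z \subset y |: (restrH xH h Y :\ m).
  apply/subsetP => z zZ; rewrite !inE Zh // eqxx andbT.
  case: eqVneq => [//|zy] /=; have [zY|zY] := boolP (z \in Y).
    by rewrite andbT; apply: contraNneq mZ => <-.
  by exfalso; have := pair_le z y zZ yZ zy; have := heavy z zZ zY; lra.
have Y_split : ws h Y = xW m + ws h (restrH xH h Y :\ m).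
  by rewrite -wsum_restrH -{1}(setD1K mYh) wsum_setU1 ?setD11.
have y_new : y \notin restrH xH h Y :\ m by rewrite !inE (negbTE yY) andbF.
by have := wsum_subset h Z_sub; rewrite (wsum_setU1 y_new (Zh y yZ)); lra.
Qed.

Lemma chDP (A : {set X}) x :
  reflect [/\ x \in A, (rk (xD x) None < rk (xD x) (Some x))%N &
     forall y, y \in A -> xD y = xD x -> (rk (xD x) (Some y) <= rk (xD x) (Some x))%N]
    (x \in chD A).
Proof.
rewrite inE; apply: (iffP and3P) => [[xA best /forall_inP top]|[xA best top]].
  by split=> // y yA dy; have := top y yA; rewrite dy eqxx.
by split=> //; apply/forall_inP => y yA; apply/implyP => /eqP; apply: top.
Qed.

Lemma chD_matching (A : {set X}) : is_matching xD (chD A).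
Proof.
move=> d; apply/card_le1_eqP => x y /setIdP [/chDP [xA _ x_top] /eqP dx].
case/setIdP => /chDP [yA _ y_top] /eqP dy.
have rk_eq : rk d (Some y) = rk d (Some x).
  have := x_top y yA (etrans dy (esym dx)); have := y_top x xA (etrans dx (esym dy)).
  by rewrite dx dy => le_xy le_yx; apply/eqP; rewrite eqn_leq le_xy le_yx.
by have [] : Some y = Some x by apply: (rk_inj _ _ rk_eq); rewrite inE /= ?dx ?dy.
Qed.

Lemma chH_subset (Y : {set X}) : chH Y \subset Y.
Proof.
apply/bigcupsP => h _; apply: subset_trans (ch_h_subset h _) _.
by apply/subsetP => x; rewrite inE => /andP [].
Qed.

Lemma mem_chH (Y : {set X}) h x : x \in ch h (restrH xH h Y) -> x \in chH Y.
Proof. by move=> xG; apply/bigcupP; exists h. Qed.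

Lemma chH_restrH (Y : {set X}) h x :
  x \in chH Y -> xH x = h -> x \in ch h (restrH xH h Y).
Proof.
case/bigcupP => h' _ xG xh; suff <- : h' = h by [].
by have := subsetP (ch_h_subset h' _) x xG; rewrite inE xh => /andP [_ /eqP].
Qed.

Lemma da_R_succ n : Rd n.+1 = Rd n :|: (Yd n :\: Zd n).
Proof. by []. Qed.

Lemma da_R_subset n : Rd n \subset Rd n.+1.
Proof. by rewrite da_R_succ subsetUl. Qed.

Lemma da_R_rejected n y :
  y \in Rd n -> exists2 i, (i < n)%N & (y \in Yd i) && (y \notin Zd i).
Proof.
elim: n => [|n IH]; first by rewrite inE.
rewrite da_R_succ in_setU in_setD andbC => /orP [/IH [i lt_in yi]|yn].
  by exists i => //; apply: ltnW.
by exists n.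
Qed.

(* Held contracts are not rejected, and rejections only remove competitors. *)
Lemma da_Z_subset_Y n : Zd n \subset Yd n.+1.
Proof.
apply/subsetP => x xZ; have /chDP [xR best top] := subsetP (chH_subset _) x xZ.
apply/chDP; split=> //; first by rewrite da_R_succ !inE xZ /= orbF; rewrite inE in xR.
move=> y; rewrite !in_setC => yR; apply: top; rewrite in_setC.
by apply: contra yR; apply: (subsetP (da_R_subset n)).
Qed.

(* A doctor proposes her favourite unrejected contract, so a contract she
   prefers to her proposal must already have been rejected. *)
Lemma prefers_da_R n z :
  z \notin Yd n -> prefers_to_current xD rk z (Yd n) -> z \in Rd n.
Proof.
move=> + [beats_held beats_none]; apply: contraR => zR.
have zR' : z \in ~: Rd n by rewrite inE.
have [c /andP [cY /eqP dc] | no_proposal] :=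
  pickP [pred c | (c \in Yd n) && (xD c == xD z)].
  have /chDP [_ _ top] := cY; have := top z zR' (esym dc).
  by rewrite dc leqNgt (beats_held c cY dc).
have z_acceptable : (rk (xD z) None < rk (xD z) (Some z))%N.
  by apply: beats_none => y yY dy; have := no_proposal y; rewrite /= yY dy eqxx.
have z_cand : (z \in ~: Rd n) && (xD z == xD z) by rewrite zR' eqxx.
case: (arg_maxnP (P := fun c => (c \in ~: Rd n) && (xD c == xD z))
               (fun c => rk (xD z) (Some c)) z_cand) => c /andP [cR /eqP dc] c_top.
have cY : c \in Yd n.
  apply/chDP; split=> //; rewrite dc.
    by apply: leq_trans z_acceptable (c_top z z_cand).
  by move=> y yR dy; apply: c_top; rewrite yR dy eqxx.
by have := no_proposal c; rewrite /= cY dc eqxx.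
Qed.

Lemma ch_h_da_subset h n :
  ch h (restrH xH h (Yd n)) \subset restrH xH h (Yd n.+1).
Proof.
apply/subsetP => x xG; have /setIdP [_ xh] := subsetP (ch_h_subset h _) x xG.
by apply/setIdP; split=> //; apply: (subsetP (da_Z_subset_Y n)); apply: mem_chH xG.
Qed.

Lemma da_outbids h y i n : (i <= n)%N ->
  outbids h (ch h (restrH xH h (Yd i))) y -> outbids h (ch h (restrH xH h (Yd n))) y.
Proof.
move/subnKC <-; elim: (n - i)%N => [|k IH]; rewrite ?addn0 // addnS => /IH.
exact: outbids_ch_h (ch_h_da_subset h _).
Qed.

Lemma da_R_outbid h n z : z \in Rd n -> xH z = h ->
  exists2 m, m \in restrH xH h (Yd n) &
    xW z <= xW m /\ 3 / 2 * B h <= ws h (Yd n) + xW z.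
Proof.
move=> zR zh; have [i lt_in /andP [zY zZ]] := da_R_rejected zR.
have zS : z \in restrH xH h (Yd i) by rewrite inE zY zh eqxx.
have zG : z \notin ch h (restrH xH h (Yd i)) by apply: contra zZ; apply: mem_chH.
have := da_outbids (ltnW lt_in) (ch_h_outbids zS zG).
move/(outbids_subset (ch_h_subset _ _))/outbids_wsum; rewrite wsum_restrH.
by apply=> c; rewrite inE => /andP [_ /eqP].
Qed.

Lemma da_R_card n : (forall j, (j < n)%N -> Yd j != Zd j) -> (n <= #|Rd n|)%N.
Proof.
elim: n => [|n IH] YZ //; apply: leq_ltn_trans (IH _) (proper_card _).
  by move=> j lt_jn; apply: YZ; apply: ltnW.
rewrite properE da_R_subset.
have /subsetPn [x xY xZ] : ~~ (Yd n \subset Zd n).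
  by apply: contra (YZ n (ltnSn n)) => sYZ; rewrite eqEsubset sYZ chH_subset.
apply/subsetPn; exists x; first by rewrite da_R_succ in_setU in_setD xZ xY orbT.
by case/chDP: xY; rewrite inE.
Qed.

Lemma da_terminates :
  exists n, Yd n = Zd n /\ forall m, (m < n)%N -> Yd m <> Zd m.
Proof.
have ex_fix : exists n, Yd n == Zd n.
  case: (boolP [exists j : 'I_#|X|.+1, Yd j == Zd j]) => [/existsP [j YZj]|/existsPn none].
    by exists j.
  by have := da_R_card (fun j lt_j => none (Ordinal lt_j)); rewrite ltnNge max_card.
case: (ex_minnP ex_fix) => n /eqP YZn n_min; exists n; split=> // m lt_mn /eqP YZm.
by have := n_min m YZm; rewrite leqNgt lt_mn.
Qed.

Lemma da_fixpoint_wsum_lt h n : Yd n = Zd n -> ws h (Yd n) < 3 / 2 * B h.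
Proof.
move=> YZn; apply: le_lt_trans (wsum_ch_h_lt h (restrH xH h (Yd n))).
rewrite -wsum_restrH; apply: wsum_subset; apply/subsetP => x /setIdP [xY /eqP xh].
have xZ : x \in Zd n by rewrite -YZn.
exact: chH_restrH xZ xh.
Qed.

Lemma da_fixpoint_stable (f : H -> {set X} -> R) (gamma : H -> R) n :
  (forall h, 0 < gamma h) ->
  (forall h (Y : {set X}), (forall x, x \in Y -> xH x = h) -> f h Y = gamma h * ws h Y) ->
  Yd n = Zd n ->
  stable xD xH xW rk f (fun h => Num.max (B h) (ws h (Yd n))) (Yd n).
Proof.
move=> gamma_gt0 fE YZn; split.
  by split=> [|h]; [apply: chD_matching | rewrite le_max lexx orbT].
move=> h Z [Zh _ Z_pref f_lt wZ].
have Yh x : x \in restrH xH h (Yd n) -> xH x = h by case/setIdP => _ /eqP.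
rewrite (fE h _ Yh) (fE h _ Zh) ltr_pM2l // wsum_restrH in f_lt.
have ZB : ws h Z <= B h.
  by move: wZ; rewrite le_max => /orP [//|ZY]; have := lt_le_trans f_lt ZY; rewrite ltxx.
have := wsum_le_of_outbid Zh ZB (fun z zZ zY =>
  da_R_outbid (prefers_da_R zY (Z_pref z zZ zY)) (Zh z zZ)).
by rewrite leNgt f_lt.
Qed.

End Market.

Theorem theorem7 (R : realFieldType) (D H X : finType)
    (xD : X -> D) (xH : X -> H) (xW : X -> R)
    (rk : D -> option X -> nat) (f : H -> {set X} -> R)
    (B : H -> R) (gamma : H -> R) (tb : X -> nat) :
  (* X ⊆ D × H × R: a contract is determined by its triple *)
  injective (fun x => (xD x, xH x, xW x)) ->
  (* strict preferences of each doctor on X_d ∪ {∅} *)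
  (forall d : D, {in [pred o : option X | if o is Some x then xD x == d else true] &,
                   injective (rk d)}) ->
  (forall h, 0 < B h) ->
  (forall x, 0 < xW x /\ xW x <= B (xH x)) ->
  (* utilities proportional to total wage *)
  (forall h, 0 < gamma h) ->
  (forall h (Y : {set X}), (forall x, x \in Y -> xH x = h) ->
     f h Y = gamma h * wsum xH xW h Y) ->
  (* fixed tie-breaking order *)
  injective tb ->
  exists n : nat,
    [/\ da_Y xD xH xW rk B tb n = da_Z xD xH xW rk B tb n,
        (forall m, (m < n)%N -> da_Y xD xH xW rk B tb m <> da_Z xD xH xW rk B tb m) &
        exists B' : H -> R,
          (forall h, B h <= B' h <= (3 / 2) * B h) /\
          stable xD xH xW rk f B' (da_Y xD xH xW rk B tb n)].
Proof.
(* Contracts are only ever compared as elements of [X]. *)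
move=> _ rk_inj B_gt0 xW_bounds gamma_gt0 fE tb_inj.
have xW_ge0 x : 0 <= xW x by have [/ltW] := xW_bounds x.
have xW_le_B x : xW x <= B (xH x) by have [] := xW_bounds x.
have [n [YZn first_fixpoint]] := da_terminates xD xH xW rk B tb.
have stable_n := da_fixpoint_stable tb_inj xW_ge0 rk_inj gamma_gt0 fE YZn.
exists n; split=> //; eexists; split; last exact: stable_n.
move=> h; have ws_lt := da_fixpoint_wsum_lt xW_ge0 B_gt0 xW_le_B h YZn.
by rewrite le_max lexx ge_max (ltW ws_lt) andbT; have := B_gt0 h; lra.
Qed.
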